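(* Let $f:\mathrm{Sh}(\mathcal{D},K)\to\widehat{\mathbb{L}}$ be the geometric morphism whose inverse image $f^*$ is the cocontinuous extension along the Yoneda embedding $y_{\mathbb{L}}:\mathbb{L}\to\widehat{\mathbb{L}}$ of the functor $l\mapsto\tilde{y}(y_{\mathbb{L}}l)$. Then for every dcpo $A\in\mathcal{D}$ there is an isomorphism $f_*(\tilde{y}A)\cong|A|$, natural in $A$, where $|A|\in\widehat{\mathbb{L}}$ is the underlying presheaf of points of $A$; i.e. $f_*\circ\tilde{y}\cong|{-}|$.
   Context: Fix a poset $\mathbb{L}$ with finite meets and let $\widehat{\mathbb{L}}=[\mathbb{L}^{op},\mathbf{Set}]$. $\mathcal{D}$ is the small category of dcpos internal to $\widehat{\mathbb{L}}$ and continuous maps. Each representable $y_{\mathbb{L}}l$ is subterminal and is regarded as a dcpo with the discrete order, giving a finite-meet-preserving functor $\mathbb{L}\to\mathcal{D}$. $K$ is the coverage on $\mathcal{D}$ whose covering families on $A$ are finite families of Scott-open immersions (pullbacks of $\top:1\to\Sigma$ along continuous maps into the Sierpiński dcpo $\Sigma$, whose carrier is $\Omega$) with union $A$; it is subcanonical, so Yoneda gives a fully faithful $\tilde y:\mathcal{D}\to\mathrm{Sh}(\mathcal{D},K)$. The direct image is $f_*E=\mathrm{Hom}(f^*y_{\mathbb{L}}(-),E)\cong E(y_{\mathbb{L}}(-))$. *)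

(* Internal dcpos in the presheaf topos [L^op, Set] over a
   meet-semilattice L, presented stagewise via Kripke-Joyal semantics. *)
From Stdlib Require Import ProofIrrelevance FunctionalExtensionality.


Record MeetPoset := {
  lcar :> Type;
  lle : lcar -> lcar -> Prop;
  lle_refl : forall x, lle x x;
  lle_trans : forall x y z, lle x y -> lle y z -> lle x z;
  lle_antisym : forall x y, lle x y -> lle y x -> x = y;
  ltop : lcar;
  ltop_max : forall x, lle x ltop;
  lmeet : lcar -> lcar -> lcar;
  lmeet_l : forall x y, lle (lmeet x y) x;
  lmeet_r : forall x y, lle (lmeet x y) y;
  lmeet_glb : forall x y z, lle z x -> lle z y -> lle z (lmeet x y)
}.
Arguments lle {m} x y.
Arguments lle_trans {m x y z} _ _.
Arguments ltop {m}.
Arguments lmeet {m} x y.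

Section Presheaves.
Variable L : MeetPoset.

Record Psh := {
  pob :> L -> Type;
  pres : forall (l l' : L), lle l' l -> pob l -> pob l';
  pres_id : forall l (h : lle l l) x, pres l l h x = x;
  pres_comp : forall l l' l'' (h : lle l' l) (h' : lle l'' l') (h'' : lle l'' l) x,
      pres l' l'' h' (pres l l' h x) = pres l l'' h'' x
}.
Arguments pres p {l l'} _ _.

Record PshIso (P Q : Psh) := {
  iso_fwd : forall l, P l -> Q l;
  iso_bwd : forall l, Q l -> P l;
  iso_fwd_nat : forall l l' (h : lle l' l) x,
      iso_fwd l' (pres P h x) = pres Q h (iso_fwd l x);
  iso_bwd_nat : forall l l' (h : lle l' l) y,
      iso_bwd l' (pres Q h y) = pres P h (iso_bwd l y);
  iso_bwd_fwd : forall l x, iso_bwd l (iso_fwd l x) = x;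
  iso_fwd_bwd : forall l y, iso_fwd l (iso_bwd l y) = y
}.
Arguments iso_fwd {P Q} p l _.
Arguments iso_bwd {P Q} p l _.

Section Order.
Variable P : Psh.
Variable R : forall l, P l -> P l -> Prop.
Local Notation R' x y := (R _ x y).

(* A subobject of P restricted to the stage l (an element of (Omega^P)(l)):
   a family of predicates S m on P m, for m <= l, closed under restriction. *)
Definition subobj_at (l : L) (S : forall m, P m -> Prop) : Prop :=
  forall m m' (hm : lle m l) (h : lle m' m) x, S m x -> S m' (pres P h x).

(* l forces "S is directed": inhabited, and any two elements have an upper
   bound in S. *)
Definition directed_at (l : L) (S : forall m, P m -> Prop) : Prop :=
  (exists x, S l x) /\
  (forall m, lle m l -> forall x y, S m x -> S m y ->
     exists z, S m z /\ R' x z /\ R' y z).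

(* l forces "s is a supremum of S". *)
Definition is_sup_at (l : L) (S : forall m, P m -> Prop) (s : P l) : Prop :=
  (forall m (h : lle m l) x, S m x -> R' x (pres P h s)) /\
  (forall m (h : lle m l) u,
     (forall m' (h' : lle m' m) x, S m' x -> R' x (pres P h' u)) ->
     R' (pres P h s) u).
End Order.

Record Dcpo := {
  dpsh :> Psh;
  dle : forall l, dpsh l -> dpsh l -> Prop;
  dle_res : forall l l' (h : lle l' l) x y,
      dle l x y -> dle l' (pres dpsh h x) (pres dpsh h y);
  dle_refl : forall l (x : dpsh l), dle l x x;
  dle_trans : forall l (x y z : dpsh l), dle l x y -> dle l y z -> dle l x z;
  dle_antisym : forall l (x y : dpsh l), dle l x y -> dle l y x -> x = y;
  dcomplete : forall l S, subobj_at dpsh l S -> directed_at dpsh dle l S ->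
      exists s, is_sup_at dpsh dle l S s
}.
Arguments dle d {l} _ _.

Definition image {A B : Psh} (f : forall l, A l -> B l) (S : forall m, A m -> Prop) :
  forall m, B m -> Prop := fun m y => exists x, S m x /\ y = f m x.

Record ContMap (A B : Dcpo) := {
  cm :> forall l, A l -> B l;
  cm_nat : forall l l' (h : lle l' l) x, cm l' (pres A h x) = pres B h (cm l x);
  cm_mono : forall l (x y : A l), dle A x y -> dle B (cm l x) (cm l y);
  cm_sup : forall l S s, subobj_at A l S -> directed_at A (@dle A) l S ->
      is_sup_at A (@dle A) l S s -> is_sup_at B (@dle B) l (image cm S) (cm l s)
}.
Arguments cm {A B} c l _.
Arguments cm_nat {A B} c {l l'} h x.
Arguments cm_mono {A B} c {l} _ _ _.
Arguments cm_sup {A B} c {l S s} _ _ _.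

Lemma ContMap_eq (A B : Dcpo) (f g : ContMap A B) :
  (forall l x, f l x = g l x) -> f = g.
Proof.
  destruct f as [f fn fm fs], g as [g gn gm gs]; simpl; intro E.
  assert (f = g) by (apply functional_extensionality_dep; intro l;
                     apply functional_extensionality; apply E).
  subst g. f_equal; apply proof_irrelevance.
Qed.

Lemma directed_image {A B : Dcpo} (f : ContMap A B) {l S} :
  directed_at A (@dle A) l S -> directed_at B (@dle B) l (image f S).
Proof.
  intros [[x Hx] Hd]; split.
  - exists (f l x); exists x; auto.
  - intros m hm y1 y2 [x1 [H1 ->]] [x2 [H2 ->]].
    destruct (Hd m hm x1 x2 H1 H2) as [z [Hz [Hz1 Hz2]]].
    exists (f m z); repeat split; try (exists z; auto); apply cm_mono; auto.
Qed.

Lemma subobj_image {A B : Dcpo} (f : ContMap A B) {l S} :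
  subobj_at A l S -> subobj_at B l (image (cm f) S).
Proof.
  intros HS m m' hm h y [x [Hx ->]]. exists (pres A h x); split.
  - eapply HS; eauto.
  - symmetry; apply cm_nat.
Qed.

Lemma is_sup_ext (P : Psh) R l (S S' : forall m, P m -> Prop) s :
  (forall m x, S m x <-> S' m x) -> is_sup_at P R l S s -> is_sup_at P R l S' s.
Proof.
  intros E [H1 H2]; split.
  - intros m h x Hx; apply H1, E; auto.
  - intros m h u Hu; apply H2; intros; apply Hu, E; auto.
Qed.

Definition comp {A B C : Dcpo} (g : ContMap B C) (f : ContMap A B) : ContMap A C.
Proof.
  refine {| cm := fun l x => g l (f l x) |}.
  - intros; rewrite cm_nat, cm_nat; reflexivity.
  - intros; apply cm_mono, cm_mono; auto.
  - intros l S s HS Hd Hs.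
    pose proof (cm_sup f HS Hd Hs) as H1.
    pose proof (cm_sup g (subobj_image f HS) (directed_image f Hd) H1) as H2.
    eapply is_sup_ext; [|exact H2].
    intros m y; split.
    + intros [z [[x [Hx ->]] ->]]; exists x; auto.
    + intros [x [Hx ->]]; exists (f m x); split; auto; exists x; auto.
Defined.

Definition repr_psh (l : L) : Psh.
Proof.
  refine {| pob := fun m => lle m l;
            pres := fun m m' (h : lle m' m) (x : lle m l) => lle_trans h x |}.
  - intros; apply proof_irrelevance.
  - intros; apply proof_irrelevance.
Defined.

Definition repr (l : L) : Dcpo.
Proof.
  refine {| dpsh := repr_psh l; dle := fun m x y => x = y |}.
  - intros; subst; reflexivity.
  - intros; reflexivity.
  - intros; subst; reflexivity.
  - intros; assumption.
  - intros m S HS [[x Hx] _]. exists x; split; intros; exact (proof_irrelevance (lle _ l) _ _).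
Defined.

Definition repr_incl {l l' : L} (h : lle l' l) : ContMap (repr l') (repr l).
Proof.
  refine {| cm := fun m (x : repr l' m) => (lle_trans (x : lle m l') h : repr l m) |}.
  - intros; exact (proof_irrelevance (lle _ l) _ _).
  - intros; exact (proof_irrelevance (lle _ l) _ _).
  - intros; split; intros; exact (proof_irrelevance (lle _ l) _ _).
Defined.

(* By the context, f_* E = E(y_L(-)); for E = ytilde A this is the presheaf
   l |-> D(y_L l, A), with restriction given by precomposition with the
   inclusions y_L l' -> y_L l. *)
Definition fstar_ytilde (A : Dcpo) : Psh.
Proof.
  refine {| pob := fun l => ContMap (repr l) A;
            pres := fun l l' h phi => comp phi (repr_incl h) |}.
  - intros l h phi; apply ContMap_eq; intros m x; simpl.
    f_equal; apply proof_irrelevance.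
  - intros l l' l'' h h' h'' phi; apply ContMap_eq; intros m x; simpl.
    f_equal; apply proof_irrelevance.
Defined.

Definition points (A : Dcpo) : Psh := dpsh A.

End Presheaves.

Arguments Psh L : clear implicits.
Arguments Dcpo L : clear implicits.
Arguments PshIso {L} P Q.
Arguments iso_fwd {L P Q} p l _.
Arguments iso_bwd {L P Q} p l _.
Arguments ContMap {L} A B.
Arguments cm {L A B} c l _.
Arguments comp {L A B C} g f.
Arguments repr {L} l.
Arguments repr_incl {L l l'} h.
Arguments fstar_ytilde {L} A.
Arguments points {L} A.
Arguments dle {L} d {l} _ _.
Arguments pres {L} p {l l'} _ _.

From Stdlib Require Import ProofIrrelevance.

(* This is the Yoneda lemma for the subterminal dcpos [y_L l]: since [y_L l]
   has at most one element at each stage, a continuous map [y_L l -> A] is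
   determined by its value [a : A l] at the generic element, and conversely
   every [a] gives the continuous map sending the unique element at stage
   [m <= l] to the restriction of [a] to [m].  Evaluation at the generic
   element commutes with postcomposition, which is the naturality in [A]. *)

Section RepresentableYoneda.
Variables (L : MeetPoset) (A : Dcpo L).

Lemma pres_pres_point (l m m' : L) (x : lle m l) (h : lle m' m) (a : A l) :
  pres A h (pres A x a) = pres A (lle_trans h x) a.
Proof. apply pres_comp. Qed.

Definition generic_value (l : L) (phi : ContMap (repr l) A) : A l :=
  phi l (lle_refl L l).

Lemma ContMap_repr_eq_pres (l : L) (phi : ContMap (repr l) A) (m : L) (x : lle m l) :
  phi m x = pres A x (generic_value l phi).
Proof.
  unfold generic_value; rewrite <- (@cm_nat L (repr l) A phi _ _ x).
  f_equal; apply proof_irrelevance.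
Qed.

(* Any inhabited subobject of [y_L l] at stage [m] is all of [y_L l] below [m],
   so its image consists exactly of the restrictions of [a]. *)
Lemma is_sup_at_restrictions (l m : L) (a : A l) (S : forall k, repr l k -> Prop)
    (s : lle m l) :
  subobj_at L (repr l) m S -> (exists x, S m x) ->
  is_sup_at L A (@dle L A) m (image L (fun k (x : repr l k) => pres A x a) S) (pres A s a).
Proof.
  intros HS [x0 Hx0]; split.
  - intros m' h y [x [_ ->]].
    rewrite pres_pres_point, (proof_irrelevance (lle m' l) x (lle_trans h s)).
    apply dle_refl.
  - intros m' h u Hu.
    assert (Hy : image L (fun k (x : repr l k) => pres A x a) S m'
                   (pres A (lle_trans h s) a)).
    { exists (pres (repr l) h x0); split.
      - eapply HS; [apply lle_refl | exact Hx0].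
      - f_equal; apply proof_irrelevance. }
    pose proof (Hu m' (lle_refl L m') _ Hy) as Hle.
    rewrite pres_id in Hle.
    rewrite pres_pres_point; exact Hle.
Qed.

Definition restriction_map (l : L) (a : A l) : ContMap (repr l) A.
Proof.
  refine {| cm := fun m (x : repr l m) => pres A (x : lle m l) a |}.
  - intros m m' h x; symmetry; apply pres_pres_point.
  - intros m x y E; simpl in E; subst; apply dle_refl.
  - intros m S s HS [Hinh _] _; exact (is_sup_at_restrictions l m a S s HS Hinh).
Defined.

Definition repr_yoneda_iso : PshIso (fstar_ytilde A) (points A).
Proof.
  refine {| iso_fwd := fun l (phi : fstar_ytilde A l) => (generic_value l phi : points A l);
            iso_bwd := fun l (a : points A l) => (restriction_map l a : fstar_ytilde A l) |}.
  - intros l l' h phi; unfold generic_value; simpl.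
    rewrite ContMap_repr_eq_pres; f_equal; apply proof_irrelevance.
  - intros l l' h a; apply ContMap_eq; intros m x; exact (pres_pres_point l l' m h x a).
  - intros l phi; apply ContMap_eq; intros m x; symmetry; apply ContMap_repr_eq_pres.
  - intros l a; apply pres_id.
Defined.

End RepresentableYoneda.

Theorem mainTheorem19 (L : MeetPoset) :
  exists phi : forall A : Dcpo L, PshIso (fstar_ytilde A) (points A),
    forall (A B : Dcpo L) (g : ContMap A B) (l : L) (h : ContMap (repr l) A),
      iso_fwd (phi B) l (comp g h) = g l (iso_fwd (phi A) l h).
Proof.
  exists (repr_yoneda_iso L); intros A B g l h; reflexivity.
Qed.
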